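(* Let $\Sigma\subseteq\Delta\subseteq\mathcal L_\Diamond$ be closed under subformulas with $\Sigma$ finite, let $\mathcal W$ be a finite $\Sigma$-labelled frame, let $\mathcal X$ be a $\Delta$-labelled frame, and let $w\in|\mathcal W|$, $x\in|\mathcal X|$. Then: (1) if $\mathrm{Sim}(w)\in\ell^-_{\mathcal X}(x)$, then there is $y\succcurlyeq x$ such that $(\mathcal W,w)\rightharpoonup(\mathcal X,y)$; (2) if there is $y\succcurlyeq x$ such that $(\mathcal W,w)\rightharpoonup(\mathcal X,y)$, then $\mathrm{Sim}(w)\notin\ell^+_{\mathcal X}(x)$. In particular, if $\Delta=\mathcal L_\Diamond$, then $\mathrm{Sim}(w)\in\ell^-_{\mathcal X}(x)$ if and only if there is $y\succcurlyeq x$ with $(\mathcal W,w)\rightharpoonup(\mathcal X,y)$.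
   Context: $\mathcal L_\Diamond$ is the propositional language with $\bot,\wedge,\vee,\to$ and unary modalities $\bigcirc$, $\Diamond$. For $\Sigma$ closed under subformulas, a $\Sigma$-type is a pair $\Phi=(\Phi^-;\Phi^+)$ of subsets of $\Sigma$ with: $\Phi^-\cap\Phi^+=\varnothing$; $\Phi^-\cup\Phi^+=\Sigma$; $\bot\notin\Phi^+$; for $\varphi\wedge\psi\in\Sigma$, $\varphi\wedge\psi\in\Phi^+$ iff $\varphi,\psi\in\Phi^+$; for $\varphi\vee\psi\in\Sigma$, $\varphi\vee\psi\in\Phi^+$ iff $\varphi\in\Phi^+$ or $\psi\in\Phi^+$; if $\varphi\to\psi\in\Phi^+$ then $\varphi\in\Phi^-$ or $\psi\in\Phi^+$; if $\Diamond\varphi\in\Phi^-$ then $\varphi\in\Phi^-$. $\Phi\preccurlyeq_T\Psi$ iff $\Phi^+\subseteq\Psi^+$; for a $\Sigma$-type $\Phi$ and $\Delta$-type $\Psi$ ($\Sigma\subseteq\Delta$), $\Phi\subseteq_T\Psi$ iff $\Phi^-\subseteq\Psi^-$ and $\Phi^+\subseteq\Psi^+$. A $\Sigma$-labelled frame is $(W,\preccurlyeq,\ell)$ with $\preccurlyeq$ a partial order on $W$, $\ell$ mapping $W$ to $\Sigma$-types, $w\preccurlyeq v\Rightarrow\ell(w)\preccurlyeq_T\ell(v)$, and whenever $\varphi\to\psi\in\ell^-(w)$ there is $v\succcurlyeq w$ with $\varphi\in\ell^+(v)$, $\psi\in\ell^-(v)$. A simulation between a $\Sigma$-labelled frame $\mathcal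 X$ and a $\Delta$-labelled frame $\mathcal Y$ is a relation $E\subseteq|\mathcal X|\times|\mathcal Y|$ that is forward-confluent (if $x\,E\,y$ and $x\preccurlyeq x'$ then there is $y'\succcurlyeq y$ with $x'\,E\,y'$) and such that $x\,E\,y$ implies $\ell_{\mathcal X}(x)\subseteq_T\ell_{\mathcal Y}(y)$. We write $(\mathcal X,x)\rightharpoonup(\mathcal Y,y)$ if some simulation $E$ has $x\,E\,y$. For a finite $\Sigma$-labelled frame $\mathcal W$ and $w\in|\mathcal W|$, the formula $\mathrm{Sim}(w)$ is defined by backwards induction on the strict order $\prec$ of $\mathcal W$: $\mathrm{Sim}(w)=\bigwedge\ell^+(w)\to\big(\bigvee\ell^-(w)\vee\bigvee_{v\succ w}\mathrm{Sim}(v)\big)$, with $\bigwedge\varnothing=\top$, $\bigvee\varnothing=\bot$. (Here $\ell^{\pm}(w)$ are finite as $\Sigma$ is finite; the formula $\mathrm{Sim}(w)$ is assumed to belong to $\Delta$ when evaluated against $\ell_{\mathcal X}$.) *)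

From HB Require Import structures.
From mathcomp Require Import all_boot.
Set Implicit Arguments. Unset Strict Implicit. Unset Printing Implicit Defensive.

Inductive form : Type :=
| Var of nat
| Bot
| And of form & form
| Or of form & form
| Imp of form & form
| Next of form
| Dia of form.

Definition form_eq_dec (a b : form) : {a = b} + {a <> b}.
Proof. decide equality; decide equality. Defined.

Definition form_eqb (a b : form) : bool := if form_eq_dec a b then true else false.
Lemma form_eqP : Equality.axiom form_eqb.
Proof. move=> a b; rewrite /form_eqb; case: form_eq_dec => h; [left|right]; done. Qed.
HB.instance Definition _ := hasDecEq.Build form form_eqP.

Definition Top : form := Imp Bot Bot.

Fixpoint bigAnd (s : seq form) : form :=
  match s with
  | [::] => Top
  | [:: a] => a
  | a :: s' => And a (bigAnd s')
  end.
Fixpoint bigOr (s : seq form) : form :=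
  match s with
  | [::] => Bot
  | [:: a] => a
  | a :: s' => Or a (bigOr s')
  end.

(* closure under (immediate, hence all) subformulas *)
Definition subf_closed (S : form -> Prop) : Prop :=
  (forall a b, S (And a b) -> S a /\ S b) /\
  (forall a b, S (Or a b) -> S a /\ S b) /\
  (forall a b, S (Imp a b) -> S a /\ S b) /\
  (forall a, S (Next a) -> S a) /\
  (forall a, S (Dia a) -> S a).

Definition is_type (S : form -> Prop) (m p : form -> Prop) : Prop :=
  (forall f, ~ (m f /\ p f)) /\
  (forall f, S f <-> (m f \/ p f)) /\
  ~ p Bot /\
  (forall a b, S (And a b) -> (p (And a b) <-> p a /\ p b)) /\
  (forall a b, S (Or a b) -> (p (Or a b) <-> p a \/ p b)) /\
  (forall a b, p (Imp a b) -> m a \/ p b) /\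
  (forall a, m (Dia a) -> m a).

(* (X, le, l) with l(x) = (m x ; p x) is an S-labelled frame *)
Definition is_lframe (S : form -> Prop) (X : Type) (le : X -> X -> Prop)
  (m p : X -> form -> Prop) : Prop :=
  (forall x, le x x) /\
  (forall x y z, le x y -> le y z -> le x z) /\
  (forall x y, le x y -> le y x -> x = y) /\
  (forall x, is_type S (m x) (p x)) /\
  (forall x y, le x y -> forall f, p x f -> p y f) /\
  (forall x a b, m x (Imp a b) -> exists y, le x y /\ p y a /\ m y b).

Definition is_simulation (X Y : Type)
  (leX : X -> X -> Prop) (mX pX : X -> form -> Prop)
  (leY : Y -> Y -> Prop) (mY pY : Y -> form -> Prop)
  (E : X -> Y -> Prop) : Prop :=
  (forall x y x', E x y -> leX x x' -> exists y', leY y y' /\ E x' y') /\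
  (forall x y, E x y -> (forall f, mX x f -> mY y f) /\ (forall f, pX x f -> pY y f)).

Definition simulates (X Y : Type)
  (leX : X -> X -> Prop) (mX pX : X -> form -> Prop)
  (leY : Y -> Y -> Prop) (mY pY : Y -> form -> Prop) (x : X) (y : Y) : Prop :=
  exists E, is_simulation leX mX pX leY mY pY E /\ E x y.

(* Finite Sigma-labelled frame W: Sigma given as a finite list, label of w
   given by its positive part lp w (a boolean predicate); the negative part
   is Sigma minus the positive part. *)
Definition lminusW (Sig : seq form) (W : Type) (lp : W -> pred form) (w : W) (f : form) : Prop :=
  (f \in Sig) && ~~ lp w f.
Definition lplusW (W : Type) (lp : W -> pred form) (w : W) (f : form) : Prop := lp w f.

(* Sim(w), by backwards induction on the strict order; the fuel #|W| is
   always sufficient since strict chains in W have at most #|W| elements. *)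
Fixpoint SimF (Sig : seq form) (W : finType) (le : rel W) (lp : W -> pred form)
  (n : nat) (w : W) : form :=
  match n with
  | 0 => Bot
  | n'.+1 =>
      Imp (bigAnd [seq f <- Sig | lp w f])
          (Or (bigOr [seq f <- Sig | ~~ lp w f])
              (bigOr [seq SimF Sig le lp n' v | v <- enum W & le w v && (v != w)]))
  end.

Definition Sim (Sig : seq form) (W : finType) (le : rel W) (lp : W -> pred form) (w : W) : form :=
  SimF Sig le lp #|W| w.

(* If Sim(w) is
   refuted at x, some y >= x makes every formula of l+(w) true and every
   disjunct false; so l(w) sits inside l(y), and inductively each strict
   successor v of w simulates into a point above y, which together give a
   simulation of w into y.  Conversely, a simulation of w into y >= x forces
   /\ l+(w) true at y while no disjunct can be true there, so Sim(w) is not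
   true at x.  The induction runs on the size of the strict up-set of w, which
   decreases along the strict order and is below #|W|: this is why the fuel
   #|W| in Sim suffices. *)

From Corelib Require Import Setoid.
From mathcomp Require Import all_boot.

Set Implicit Arguments.
Unset Strict Implicit.

Lemma subf_And D a b : subf_closed D -> D (And a b) -> D a /\ D b.
Proof. by case=> h _; apply: h. Qed.

Lemma subf_Or D a b : subf_closed D -> D (Or a b) -> D a /\ D b.
Proof. by case=> _ [h _]; apply: h. Qed.

Lemma subf_Imp D a b : subf_closed D -> D (Imp a b) -> D a /\ D b.
Proof. by case=> _ [_ [h _]]; apply: h. Qed.

Section LabelledFrame.

Variables (D : form -> Prop) (X : Type) (le : X -> X -> Prop) (m p : X -> form -> Prop).
Hypothesis hX : is_lframe D le m p.

Lemma lframe_refl x : le x x.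
Proof. by case: hX. Qed.

Lemma lframe_trans x y z : le x y -> le y z -> le x z.
Proof. by case: hX => _ [htr _]; apply: htr. Qed.

Lemma lframe_antisym x y : le x y -> le y x -> x = y.
Proof. by case: hX => _ [_ [han _]]; apply: han. Qed.

Lemma lframe_mono x y f : le x y -> p x f -> p y f.
Proof. by case: hX => _ [_ [_ [_ [hmono _]]]] lxy; apply: hmono. Qed.

Lemma lframe_refute x a b : m x (Imp a b) -> exists y, le x y /\ p y a /\ m y b.
Proof. by case: hX => _ [_ [_ [_ [_ href]]]]; apply: href. Qed.

Lemma lframe_type x : is_type D (m x) (p x).
Proof. by case: hX => _ [_ [_ [htype _]]]. Qed.

Lemma label_disj x f : m x f -> p x f -> False.
Proof. by case: (lframe_type x) => hdisj _ hm hp; apply: (hdisj f). Qed.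

Lemma label_dom x f : m x f \/ p x f -> D f.
Proof. by case: (lframe_type x) => _ [hdom _] /hdom. Qed.

Lemma label_total x f : D f -> m x f \/ p x f.
Proof. by case: (lframe_type x) => _ [hdom _] /hdom. Qed.

Lemma label_Bot x : ~ p x Bot.
Proof. by case: (lframe_type x) => _ [_ []]. Qed.

Lemma label_And x a b : D (And a b) -> (p x (And a b) <-> p x a /\ p x b).
Proof. by case: (lframe_type x) => _ [_ [_ [hand _]]]; apply: hand. Qed.

Lemma label_Or x a b : D (Or a b) -> (p x (Or a b) <-> p x a \/ p x b).
Proof. by case: (lframe_type x) => _ [_ [_ [_ [hor _]]]]; apply: hor. Qed.

Lemma label_Imp x a b : p x (Imp a b) -> m x a \/ p x b.
Proof. by case: (lframe_type x) => _ [_ [_ [_ [_ [himp _]]]]]; apply: himp. Qed.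

Lemma label_Top x : D Top -> p x Top.
Proof.
move=> /(label_total x) [/lframe_refute [y [_ [pBot _]]]|//].
by case: (label_Bot pBot).
Qed.

Hypothesis hD : subf_closed D.

Lemma label_Or_neg x a b : m x (Or a b) -> m x a /\ m x b.
Proof.
move=> mab; have Dab := label_dom (or_introl mab).
have [Da Db] := subf_Or hD Dab.
have neg f : D f -> ~ p x f -> m x f by move/(label_total x) => [|].
split; apply: neg => // pf; apply: (label_disj mab); apply/label_Or; tauto.
Qed.

Lemma label_bigAnd x s : D (bigAnd s) -> (p x (bigAnd s) <-> {in s, forall f, p x f}).
Proof.
elim: s => [|a s IH] /=; first by move=> DT; split=> // _; apply: label_Top.
case: s IH => [|b s] IH Das.
  by split=> [pa f /[!inE] /eqP -> // | ]; apply; rewrite inE.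
have [Da Ds] := subf_And hD Das.
rewrite label_And // IH //; split=> [[pa ps] f | ps].
  by rewrite in_cons => /orP [/eqP -> // | /ps].
split=> [|f fs]; apply: ps; by rewrite in_cons ?eqxx ?fs ?orbT.
Qed.

Lemma label_bigOr x s : D (bigOr s) -> (p x (bigOr s) <-> exists2 f, f \in s & p x f).
Proof.
elim: s => [|a s IH] /=.
  by move=> _; split=> [/label_Bot | [f]].
case: s IH => [|b s] IH Das.
  by split=> [pa | [f /[!inE] /eqP ->]]; first exists a; rewrite ?inE.
have [Da Ds] := subf_Or hD Das.
rewrite label_Or // IH //; split=> [[pa | [f fs pf]] | [f]].
- by exists a; rewrite ?in_cons ?eqxx.
- by exists f; rewrite // in_cons fs orbT.
by rewrite in_cons => /orP [/eqP -> | fs] pf; [left | right; exists f].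
Qed.

Lemma label_bigOr_neg x s : m x (bigOr s) -> {in s, forall f, m x f}.
Proof.
elim: s => [|a s IH] //=.
case: s IH => [|b s] IH; first by move=> ma f /[!inE] /eqP ->.
move=> /label_Or_neg [ma ms] f; rewrite in_cons => /orP [/eqP -> // | fs].
exact: IH.
Qed.

End LabelledFrame.

Section Simulation.

Variables (V Y : Type) (leV : V -> V -> Prop) (mV pV : V -> form -> Prop)
  (leY : Y -> Y -> Prop) (mY pY : Y -> form -> Prop).

Local Notation sim := (simulates leV mV pV leY mY pY).

Lemma simulates_forward v y v' : sim v y -> leV v v' -> exists y', leY y y' /\ sim v' y'.
Proof.
case=> E [[hfwd hlab] Evy] levv'.
by have [y' [leyy' Ey']] := hfwd _ _ _ Evy levv'; exists y'; split; last exists E.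
Qed.

Lemma simulates_neg v y f : sim v y -> mV v f -> mY y f.
Proof. by case=> E [[_ hlab] Evy]; apply: (hlab _ _ Evy).1. Qed.

Lemma simulates_pos v y f : sim v y -> pV v f -> pY y f.
Proof. by case=> E [[_ hlab] Evy]; apply: (hlab _ _ Evy).2. Qed.

End Simulation.

Lemma simulates_of_succ (V : eqType) (Y : Type)
    (leV : V -> V -> Prop) (mV pV : V -> form -> Prop) (leY : Y -> Y -> Prop) (mY pY : Y -> form -> Prop) (v : V) (y : Y) :
  leY y y -> (forall f, mV v f -> mY y f) -> (forall f, pV v f -> pY y f) ->
  (forall v', leV v v' -> v' != v ->
     exists y', leY y y' /\ simulates leV mV pV leY mY pY v' y') ->
  simulates leV mV pV leY mY pY v y.
Proof.
move=> leyy hneg hpos hsucc.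
exists (fun a b => (a = v /\ b = y) \/ simulates leV mV pV leY mY pY a b).
split; last by left.
split=> [a b a' [[-> ->] | simab] leaa' | a b [[-> ->] // | simab]].
- have [-> | nav] := eqVneq a' v; first by exists y; split=> //; left.
  by have [y' [leyy' simy']] := hsucc _ leaa' nav; exists y'; split=> //; right.
- by have [b' [lebb' simb']] := simulates_forward simab leaa'; exists b'; split=> //; right.
- by split=> f; [apply: simulates_neg | apply: simulates_pos]; apply: simab.
Qed.

Section StrictUpset.

Variables (W : finType) (leW : rel W).

Definition strict_up (w : W) : {set W} := [set u | leW w u && (u != w)].

Lemma card_strict_up_lt_card w : #|strict_up w| < #|W|.
Proof.
rewrite -cardsT; apply: proper_card; apply/properP; split; first exact: subsetT.
by exists w; rewrite ?inE ?eqxx ?andbF.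
Qed.

Hypotheses (leW_trans : forall x y z, leW x y -> leW y z -> leW x z)
  (leW_anti : forall x y, leW x y -> leW y x -> x = y).

Lemma card_strict_up_lt w v : leW w v -> v != w -> #|strict_up v| < #|strict_up w|.
Proof.
move=> lewv nvw; apply: proper_card; apply/properP; split.
  apply/subsetP => u; rewrite !inE => /andP [levu nuv].
  rewrite (leW_trans lewv levu) /=; apply: contra nuv => /eqP euw; subst u.
  by rewrite (leW_anti lewv levu).
by exists v; rewrite !inE ?lewv ?nvw ?eqxx ?andbF.
Qed.

End StrictUpset.

Section SimFormula.

Variables (Sig : seq form) (W : finType) (leW : rel W) (lpW : W -> pred form).
Variables (D : form -> Prop) (X : Type) (leX : X -> X -> Prop) (mX pX : X -> form -> Prop).
Hypotheses (hD : subf_closed D) (hX : is_lframe D leX mX pX).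

Local Notation simW := (simulates (fun a b => leW a b) (lminusW Sig lpW) (lplusW lpW) leX mX pX).
Local Notation SimF := (SimF Sig leW lpW).

Lemma simulated_SimF_not_pos n w y x : simW w y -> leX x y -> ~ pX x (SimF n w).
Proof.
elim: n w y x => [|n IH] w y x simwy lexy /=; first exact: label_Bot hX x.
move=> /(lframe_mono hX lexy) pSim.
have [DA DB] := subf_Imp hD (label_dom hX (or_intror pSim)).
have [DL DR] := subf_Or hD DB.
have pA : pX y (bigAnd [seq f <- Sig | lpW w f]).
  apply/(label_bigAnd hX hD) => // f; rewrite mem_filter => /andP [lpf _].
  exact: simulates_pos simwy lpf.
case: (label_Imp hX pSim) => [mA | /(label_Or hX y DB).1 [pL | pR]].
- exact: (label_disj hX mA pA).
- have [f] := (label_bigOr hX hD _ DL).1 pL.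
  rewrite mem_filter => /andP [nlpf fSig] pf.
  have mf : mX y f by apply: (simulates_neg simwy); rewrite /lminusW fSig nlpf.
  exact: (label_disj hX mf pf).
- have [f /mapP [v]] := (label_bigOr hX hD _ DR).1 pR.
  rewrite mem_filter => /andP [/andP [lewv _] _] -> pv.
  have [y' [leyy' simvy']] := simulates_forward simwy lewv.
  exact: IH simvy' leyy' pv.
Qed.

Hypothesis hW : is_lframe (fun f => f \in Sig) (fun a b => leW a b) (lminusW Sig lpW) (lplusW lpW).

Lemma SimF_neg_simulated n w x :
  #|strict_up leW w| < n -> mX x (SimF n w) -> exists y, leX x y /\ simW w y.
Proof.
elim: n w x => [|n IH] w x // card_lt /= /(lframe_refute hX) [y [lexy [pA mB]]].
have [mL mR] := label_Or_neg hX hD mB.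
exists y; split=> //; apply: simulates_of_succ.
- exact: (lframe_refl hX y).
- move=> f /andP [fSig nlpf]; apply: (label_bigOr_neg hX hD mL).
  by rewrite mem_filter nlpf.
- move=> f lpf; have DA := label_dom hX (or_intror pA).
  apply: ((label_bigAnd hX hD y DA).1 pA).
  by rewrite mem_filter lpf (label_dom hW (or_intror lpf)).
move=> v lewv nvw.
have mv : mX y (SimF n v).
  apply: (label_bigOr_neg hX hD mR).
  by rewrite map_f // mem_filter mem_enum lewv nvw.
apply: IH mv; rewrite ltnS in card_lt.
exact: leq_trans (card_strict_up_lt (lframe_trans hW) (lframe_antisym hW) lewv nvw) card_lt.
Qed.

End SimFormula.

Theorem propositionB2
  (Sig : seq form) (Delta : form -> Prop)
  (hSig : subf_closed (fun f => f \in Sig))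
  (hDelta : subf_closed Delta)
  (hSD : forall f, f \in Sig -> Delta f)
  (W : finType) (leW : rel W) (lpW : W -> pred form)
  (hW : is_lframe (fun f => f \in Sig) (fun a b => leW a b) (lminusW Sig lpW) (lplusW lpW))
  (X : Type) (leX : X -> X -> Prop) (mX pX : X -> form -> Prop)
  (hX : is_lframe Delta leX mX pX)
  (w : W) (x : X) :
  (mX x (Sim Sig leW lpW w) ->
     exists y, leX x y /\
       simulates (fun a b => leW a b) (lminusW Sig lpW) (lplusW lpW) leX mX pX w y) /\
  ((exists y, leX x y /\
       simulates (fun a b => leW a b) (lminusW Sig lpW) (lplusW lpW) leX mX pX w y) ->
     ~ pX x (Sim Sig leW lpW w)) /\
  ((forall f, Delta f) ->
     (mX x (Sim Sig leW lpW w) <->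
      exists y, leX x y /\
        simulates (fun a b => leW a b) (lminusW Sig lpW) (lplusW lpW) leX mX pX w y)).
Proof.
have refuted_simulated := SimF_neg_simulated hDelta hX hW (card_strict_up_lt_card leW w) (x := x).
have simulated_not_true : (exists y, leX x y /\
    simulates (fun a b => leW a b) (lminusW Sig lpW) (lplusW lpW) leX mX pX w y) ->
    ~ pX x (Sim Sig leW lpW w).
  by case=> y [lexy simwy]; apply: simulated_SimF_not_pos hDelta hX _ _ _ _ simwy lexy.
split=> //; split=> // hall; split=> // /simulated_not_true npSim.
by case: (label_total hX x (hall (Sim Sig leW lpW w))).
Qed.
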